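(* Let $\mathbb{L}=(\mathcal{P},\mathcal{C},\parallel)$ be a Laguerre plane satisfying axioms (C) and (S). Then $\mathbb{L}$ satisfies the following condition $(\Pi)$: let $a,b,c,x$ be pairwise non-parallel points with $x\notin(a,b,c)^{\circ}$, and let $p,q$ be points such that $p\parallel c$, $p\in(a,b,x)^{\circ}$, $q\parallel b$, $q\in(a,c,x)^{\circ}$; if $K$ is a circle containing $x$ which is tangent to $(a,b,c)^{\circ}$ at $a$, then $K\cap(p,q,x)^{\circ}=\{x\}$.
   Context: A Laguerre plane is a triple $(\mathcal{P},\mathcal{C},\parallel)$ where $\mathcal{P}$ is a set of points, $\mathcal{C}\subset 2^{\mathcal{P}}$ a set of circles and $\parallel$ an equivalence relation on $\mathcal{P}$ (parallelism; its classes are called generators) such that: (1) any three pairwise non-parallel points $a,b,c$ lie on a unique circle, denoted $(a,b,c)^{\circ}$; (2) for every circle $K$ and non-parallel points $p\in K$, $q\notin K$ there is exactly one circle $L$ with $q\in L$ and $K\cap L=\{p\}$; (3) for every point $p$ and circle $K$ there is exactly one point $q\in K$ with $q\parallel p$; (4) some circle contains at least three but not all points. Circles $K,L$ are tangent at $p$ if $K\cap L=\{p\}$ or $K=L$ (with $p\in K$). For $p\in K$, $\langle p,K\rangle$ denotes the set of circles tangent to $K$ at $p$. Axiom (C): for any circles $K,L$ and any point $p\in K\setminus L$ there exists exactly one circle $M\in\langle p,K\rangle$ with $|M\cap L|=1$. Axiom (S): if $K,L,M,N$ are circles and $a,b,c,d$ points with $K\cap L=\{a\}$, $L\cap M=\{b\}$,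 $M\cap N=\{c\}$, $N\cap K=\{d\}$ and $a\nparallel c$, then there is a circle containing $a,b,c,d$. *)

(* Laguerre planes: points of type P, circles are subsets of P
   (predicates P -> Prop) singled out by the predicate C, parallelism par. *)

Section LaguerreDefs.
Variable P : Type.
Variable C : (P -> Prop) -> Prop.
Variable par : P -> P -> Prop.

Definition meet_only (K L : P -> Prop) (p : P) : Prop :=
  forall z, (K z /\ L z) <-> z = p.

Definition tangent (K L : P -> Prop) (p : P) : Prop :=
  K p /\ (meet_only K L p \/ K = L).

Definition pencil (p : P) (K : P -> Prop) (M : P -> Prop) : Prop :=
  C M /\ tangent K M p.

(* M is "the" circle (a,b,c)° (unique by axiom (1) when a,b,c pairwise non-parallel) *)
Definition circ3 (a b c : P) (M : P -> Prop) : Prop :=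
  C M /\ M a /\ M b /\ M c.

Record laguerre_plane : Prop := {
  par_refl : forall x, par x x;
  par_sym : forall x y, par x y -> par y x;
  par_trans : forall x y z, par x y -> par y z -> par x z;
  lag_ax1 : forall a b c, ~ par a b -> ~ par a c -> ~ par b c ->
      exists K, circ3 a b c K /\ forall K', circ3 a b c K' -> K' = K;
  lag_ax2 : forall K p q, C K -> K p -> ~ K q -> ~ par p q ->
      exists L, (C L /\ L q /\ meet_only K L p) /\
        forall L', (C L' /\ L' q /\ meet_only K L' p) -> L' = L;
  lag_ax3 : forall p K, C K ->
      exists q, (K q /\ par q p) /\ forall q', (K q' /\ par q' p) -> q' = q;
  lag_ax4 : exists K, C K /\
      (exists a b c, a <> b /\ a <> c /\ b <> c /\ K a /\ K b /\ K c) /\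
      (exists z, ~ K z)
}.

Definition meet_one (M L : P -> Prop) : Prop :=
  exists z, (M z /\ L z) /\ forall z', (M z' /\ L z') -> z' = z.

Definition axiom_C : Prop :=
  forall K L p, C K -> C L -> K p -> ~ L p ->
    exists M, (pencil p K M /\ meet_one M L) /\
      forall M', (pencil p K M' /\ meet_one M' L) -> M' = M.

Definition axiom_S : Prop :=
  forall K L M N a b c d, C K -> C L -> C M -> C N ->
    meet_only K L a -> meet_only L M b -> meet_only M N c -> meet_only N K d ->
    ~ par a c ->
    exists Z, C Z /\ Z a /\ Z b /\ Z c /\ Z d.

End LaguerreDefs.

(* Let N be the circle through p touching K at x.  By axiom (C) there is a
   circle touching (a,b,c)° at b and touching N; axiom (S), applied to the
   cycle (a,b,c)°, that circle, N, K, puts its contact point with N on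
   (a,b,x)°, so this contact point is p.  Likewise the circle touching (a,b,c)°
   at c touches N at a point z of (a,c,x)°, and (S) applied to the cycle
   (a,b,c)°, the two auxiliary circles, N forces z ∥ b, because p ∥ c and
   p <> c.  Hence z = q, so N = (p,q,x)°, and N touches K at x. *)

From Stdlib Require Import Classical.

Section LaguerrePlane.

Variables (P : Type) (C : (P -> Prop) -> Prop) (par : P -> P -> Prop).
Hypothesis HL : laguerre_plane P C par.

Lemma meet_only_sym (K L : P -> Prop) z : meet_only P K L z -> meet_only P L K z.
Proof. intros H w; rewrite <- (H w); tauto. Qed.

Lemma meet_only_at (K L : P -> Prop) z : meet_only P K L z -> K z /\ L z.
Proof. intro H; apply H; reflexivity. Qed.

Lemma meet_only_eq (K L : P -> Prop) z y : meet_only P K L z -> K y -> L y -> y = z.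
Proof. intros H Ky Ly; apply H; auto. Qed.

Lemma meet_oneP (M L : P -> Prop) : meet_one P M L <-> exists z, meet_only P M L z.
Proof.
  split.
  - intros [z [Hz Huniq]]; exists z; intro w; split; [apply Huniq | intros ->; exact Hz].
  - intros [z Hz]; exists z; split; [apply Hz; reflexivity | intros w Hw; apply Hz, Hw].
Qed.

Lemma npar_sym u v : ~ par u v -> ~ par v u.
Proof. intros uv vu; exact (uv (par_sym _ _ _ HL _ _ vu)). Qed.

Lemma neq_of_npar u v : ~ par u v -> u <> v.
Proof. intros uv e; apply uv; rewrite e; apply (par_refl _ _ _ HL). Qed.

Local Hint Resolve npar_sym neq_of_npar : core.

Lemma on_circle_par_eq K u v : C K -> K u -> K v -> par u v -> u = v.
Proof.
  intros CK Ku Kv uv.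
  destruct (lag_ax3 _ _ _ HL v K CK) as [w [_ Hw]].
  rewrite (Hw u (conj Ku uv)), (Hw v (conj Kv (par_refl _ _ _ HL v))).
  reflexivity.
Qed.

Lemma circ3_unique a b c K1 K2 : ~ par a b -> ~ par a c -> ~ par b c ->
  circ3 P C a b c K1 -> circ3 P C a b c K2 -> K1 = K2.
Proof.
  intros ab ac bc H1 H2.
  destruct (lag_ax1 _ _ _ HL a b c ab ac bc) as [K [_ HK]].
  rewrite (HK K1), (HK K2); auto.
Qed.

Lemma eq_circle_of_three_points K1 K2 u v w : C K1 -> C K2 ->
  K1 u -> K1 v -> K1 w -> K2 u -> K2 v -> K2 w -> u <> v -> u <> w -> v <> w ->
  K1 = K2.
Proof.
  intros C1 C2 K1u K1v K1w K2u K2v K2w uv uw vw.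
  assert (npar : forall s t, K1 s -> K1 t -> s <> t -> ~ par s t)
    by (intros s t Ks Kt st st'; exact (st (on_circle_par_eq K1 s t C1 Ks Kt st'))).
  apply (circ3_unique u v w); auto; repeat split; auto.
Qed.

Lemma touching_circle_unique N K1 K2 x y : C N -> N x -> ~ N y -> ~ par x y ->
  C K1 -> K1 y -> meet_only P N K1 x -> C K2 -> K2 y -> meet_only P N K2 x -> K1 = K2.
Proof.
  intros CN Nx Ny xy C1 K1y NK1 C2 K2y NK2.
  destruct (lag_ax2 _ _ _ HL N x y CN Nx Ny xy) as [M [_ HM]].
  rewrite (HM K1), (HM K2); auto.
Qed.

Lemma tangent_of_touching_same_point N K M x : C N -> C K -> C M ->
  meet_only P K N x -> meet_only P M N x -> K = M \/ meet_only P K M x.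
Proof.
  intros CN CK CM KN MN.
  destruct (classic (K = M)) as [KM | KM]; [now left | right].
  destruct (meet_only_at _ _ _ KN) as [Kx Nx].
  destruct (meet_only_at _ _ _ MN) as [Mx _].
  intro y; split; [| intros ->; auto].
  intros [Ky My]; destruct (classic (y = x)) as [yx | yx]; [exact yx | exfalso].
  apply KM, (touching_circle_unique N K M x y); auto using meet_only_sym.
  - intro Ny; exact (yx (meet_only_eq _ _ _ _ KN Ky Ny)).
  - intro xy; exact (yx (eq_sym (on_circle_par_eq K x y CK Kx Ky xy))).
Qed.

Hypothesis HC : axiom_C P C.

(* Uniqueness in axiom (C): [K] and [O] both lie in the pencil <a, O> and both
   meet [L] exactly once. *)
Lemma tangent_circles_touching_eq O K L a y z : C O -> C K -> C L ->
  meet_only P O K a -> ~ L a -> meet_only P O L y -> meet_only P K L z -> K = O.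
Proof.
  intros CO CK CL OK La OL KL.
  destruct (meet_only_at _ _ _ OK) as [Oa _].
  destruct (HC O L a CO CL Oa La) as [M [_ HM]].
  rewrite (HM K), (HM O); [reflexivity | |].
  - split; [split; [exact CO | split; [exact Oa | now right]] | apply meet_oneP; eauto].
  - split; [split; [exact CK | split; [exact Oa | now left]] | apply meet_oneP; eauto].
Qed.

Lemma exists_touching_circle O N u : C O -> C N -> O u -> ~ N u ->
  (forall y, ~ meet_only P O N y) ->
  exists M w, C M /\ meet_only P O M u /\ meet_only P M N w.
Proof.
  intros CO CN Ou Nu ON.
  destruct (HC O N u CO CN Ou Nu) as [M [[[CM [_ OM]] MN] _]].
  apply meet_oneP in MN as [w MN].
  destruct OM as [OM | <-]; [now exists M, w | exfalso; exact (ON w MN)].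
Qed.

Lemma touching_point_neq O K M N a x u w : C O -> C K -> C M -> C N ->
  meet_only P O K a -> meet_only P K N x -> ~ O x ->
  meet_only P O M u -> u <> a -> meet_only P M N w -> w <> x.
Proof.
  intros CO CK CM CN OK KN Ox OM ua MN ->.
  destruct (meet_only_at _ _ _ OM) as [Ou Mu].
  destruct (tangent_of_touching_same_point N K M x CN CK CM KN MN) as [<- | KM].
  - exact (ua (meet_only_eq _ _ _ _ OK Ou Mu)).
  - assert (Ma : ~ M a).
    { intro Ma; apply ua, eq_sym, (meet_only_eq _ _ _ _ OM); auto.
      exact (proj1 (meet_only_at _ _ _ OK)). }
    apply Ox; rewrite <- (tangent_circles_touching_eq O K M a u x); auto.
    exact (proj1 (meet_only_at _ _ _ KN)).
Qed.

Hypothesis HS : axiom_S P C par.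

Lemma touching_chain_concyclic K L M N a b c d Z : C K -> C L -> C M -> C N ->
  meet_only P K L a -> meet_only P L M b -> meet_only P M N c -> meet_only P N K d ->
  ~ par a c -> ~ par a d -> ~ par c d -> C Z -> Z a -> Z c -> Z d -> Z b.
Proof.
  intros CK CL CM CN KL LM MN NK ac ad cd CZ Za Zc Zd.
  destruct (HS K L M N a b c d CK CL CM CN KL LM MN NK ac) as [Z' [CZ' [Z'a [Z'b [Z'c Z'd]]]]].
  replace Z with Z'; [exact Z'b |].
  apply (circ3_unique a c d); repeat split; auto.
Qed.

Lemma touching_chain_par K L M N a b c d : C K -> C L -> C M -> C N ->
  meet_only P K L a -> meet_only P L M b -> meet_only P M N c -> meet_only P N K d ->
  par b d -> b <> d -> par a c.
Proof.
  intros CK CL CM CN KL LM MN NK bd b_d.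
  apply NNPP; intro ac.
  destruct (HS K L M N a b c d CK CL CM CN KL LM MN NK ac) as [Z [CZ [_ [Zb [_ Zd]]]]].
  exact (b_d (on_circle_par_eq Z b d CZ Zb Zd bd)).
Qed.

Section Configuration.

Variables (a b c x p q : P) (Kabc Kabx Kacx Kpqx K : P -> Prop).
Hypotheses (nab : ~ par a b) (nac : ~ par a c) (nax : ~ par a x)
  (nbc : ~ par b c) (nbx : ~ par b x) (ncx : ~ par c x).
Hypotheses (Habc : circ3 P C a b c Kabc) (Kabc_x : ~ Kabc x)
  (Habx : circ3 P C a b x Kabx) (Hacx : circ3 P C a c x Kacx)
  (pc : par p c) (Kabx_p : Kabx p) (qb : par q b) (Kacx_q : Kacx q)
  (Hpqx : circ3 P C p q x Kpqx).
Hypotheses (CK : C K) (Kx : K x) (Kabc_K : meet_only P Kabc K a).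

Let K_a : K a := proj2 (meet_only_at _ _ _ Kabc_K).

Let npar_a_p : ~ par a p.
Proof. intro H; exact (nac (par_trans _ _ _ HL _ _ _ H pc)). Qed.

Let npar_b_p : ~ par b p.
Proof. intro H; exact (nbc (par_trans _ _ _ HL _ _ _ H pc)). Qed.

Let npar_x_p : ~ par x p.
Proof.
  intro H; apply ncx, (par_sym _ _ _ HL).
  exact (par_trans _ _ _ HL _ _ _ H pc).
Qed.

Let npar_p_q : ~ par p q.
Proof.
  intro H; apply nbc, (par_trans _ _ _ HL _ q); [exact (par_sym _ _ _ HL _ _ qb) |].
  exact (par_trans _ _ _ HL _ _ _ (par_sym _ _ _ HL _ _ H) pc).
Qed.

Let npar_q_x : ~ par q x.
Proof. intro H; exact (nbx (par_trans _ _ _ HL _ _ _ (par_sym _ _ _ HL _ _ qb) H)). Qed.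

Lemma p_notin_K : ~ K p.
Proof.
  intro Kp.
  pose proof Habx as (CKabx & Kabx_a & Kabx_b & Kabx_x).
  pose proof Habc as (_ & _ & Kabc_b & _).
  assert (K = Kabx) as KE by (apply (circ3_unique a x p); auto; repeat split; auto).
  assert (K_b : K b) by (rewrite KE; exact Kabx_b).
  exact (neq_of_npar a b nab (eq_sym (meet_only_eq _ _ _ _ Kabc_K Kabc_b K_b))).
Qed.

Lemma touching_circle_at_x_through_p : exists N, C N /\ N p /\ meet_only P K N x.
Proof.
  destruct (lag_ax2 _ _ _ HL K x p CK Kx p_notin_K npar_x_p) as [N [HN _]].
  now exists N.
Qed.

Lemma c_neq_p : c <> p.
Proof.
  intro e.
  pose proof Habx as (CKabx & Kabx_a & Kabx_b & Kabx_x).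
  assert (Kabx_c : Kabx c) by (rewrite e; exact Kabx_p).
  apply Kabc_x.
  replace Kabc with Kabx; [exact Kabx_x |].
  apply (circ3_unique a b c); auto; repeat split; auto.
Qed.

Variable N : P -> Prop.
Hypotheses (CN : C N) (Np : N p) (K_N : meet_only P K N x).

Let N_x : N x := proj2 (meet_only_at _ _ _ K_N).

Lemma a_notin_N : ~ N a.
Proof. intro Na; exact (neq_of_npar a x nax (meet_only_eq _ _ _ _ K_N K_a Na)). Qed.

Lemma b_notin_N : ~ N b.
Proof.
  intro Nb; apply a_notin_N.
  pose proof Habx as (CKabx & Kabx_a & Kabx_b & Kabx_x).
  replace N with Kabx; [exact Kabx_a |].
  apply (circ3_unique b x p); auto; repeat split; auto.
Qed.

Lemma c_notin_N : ~ N c.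
Proof.
  intro Nc; apply c_neq_p.
  exact (on_circle_par_eq N c p CN Nc Np (par_sym _ _ _ HL _ _ pc)).
Qed.

Lemma Kabc_not_touching_N y : ~ meet_only P Kabc N y.
Proof.
  intro Kabc_N; apply Kabc_x.
  rewrite <- (tangent_circles_touching_eq Kabc K N a y x); auto.
  - exact (proj1 Habc).
  - exact a_notin_N.
Qed.

Lemma touching_at_b_eq_p M w : C M -> meet_only P Kabc M b -> meet_only P M N w -> w = p.
Proof.
  intros CM Kabc_M M_N.
  pose proof Habc as (CKabc & _ & _ & _).
  pose proof Habx as (CKabx & Kabx_a & Kabx_b & Kabx_x).
  destruct (meet_only_at _ _ _ M_N) as [_ N_w].
  assert (w_x : w <> x).
  { apply (touching_point_neq Kabc K M N a x b w); auto. }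
  assert (Kabx_w : Kabx w).
  { apply (touching_chain_concyclic Kabc M N K b w x a Kabx); auto using meet_only_sym. }
  destruct (classic (w = p)) as [w_p | w_p]; [exact w_p | exfalso].
  apply b_notin_N.
  replace N with Kabx; [exact Kabx_b |].
  apply (eq_circle_of_three_points Kabx N w x p); auto.
Qed.

Lemma touching_at_c_eq_q M z : C M -> meet_only P Kabc M c -> meet_only P M N z -> z = q.
Proof.
  intros CM Kabc_M M_N.
  pose proof Habc as (CKabc & _ & Kabc_b & _).
  pose proof Hacx as (CKacx & Kacx_a & Kacx_c & Kacx_x).
  destruct (exists_touching_circle Kabc N b CKabc CN Kabc_b b_notin_N Kabc_not_touching_N)
    as (M' & w & CM' & Kabc_M' & M'_N).
  rewrite (touching_at_b_eq_p M' w CM' Kabc_M' M'_N) in M'_N.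
  assert (b_z : par b z).
  { apply (touching_chain_par Kabc M' N M b p z c); auto using meet_only_sym.
    intro e; exact (c_neq_p (eq_sym e)). }
  assert (Kacx_z : Kacx z).
  { apply (touching_chain_concyclic Kabc M N K c z x a Kacx); auto using meet_only_sym. }
  apply (on_circle_par_eq Kacx); auto.
  exact (par_trans _ _ _ HL _ _ _ (par_sym _ _ _ HL _ _ b_z) (par_sym _ _ _ HL _ _ qb)).
Qed.

Lemma Kpqx_eq_N : Kpqx = N.
Proof.
  pose proof Habc as (CKabc & _ & _ & Kabc_c).
  destruct (exists_touching_circle Kabc N c CKabc CN Kabc_c c_notin_N Kabc_not_touching_N)
    as (M & z & CM & Kabc_M & M_N).
  pose proof (touching_at_c_eq_q M z CM Kabc_M M_N) as zq.
  destruct (meet_only_at _ _ _ M_N) as [_ N_z].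
  rewrite zq in N_z.
  apply (circ3_unique p q x); auto; repeat split; auto.
Qed.

End Configuration.

End LaguerrePlane.

Theorem theorem2p1 (P : Type) (C : (P -> Prop) -> Prop) (par : P -> P -> Prop) :
  laguerre_plane P C par -> axiom_C P C -> axiom_S P C par ->
  forall (a b c x p q : P) (Kabc Kabx Kacx Kpqx K : P -> Prop),
    ~ par a b -> ~ par a c -> ~ par a x -> ~ par b c -> ~ par b x -> ~ par c x ->
    circ3 P C a b c Kabc -> ~ Kabc x ->
    circ3 P C a b x Kabx -> circ3 P C a c x Kacx ->
    par p c -> Kabx p -> par q b -> Kacx q ->
    circ3 P C p q x Kpqx ->
    C K -> K x -> tangent P Kabc K a ->
    meet_only P K Kpqx x.
Proof.
  intros HL HC HS a b c x p q Kabc Kabx Kacx Kpqx K nab nac nax nbc nbx ncx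
    Habc Kabc_x Habx Hacx pc Kabx_p qb Kacx_q Hpqx CK Kx K_tangent.
  assert (Kabc_K : meet_only P Kabc K a).
  { destruct K_tangent as [_ [Kabc_K | <-]]; [exact Kabc_K | contradiction]. }
  destruct (touching_circle_at_x_through_p P C par HL a b c x p Kabc Kabx K
    nab nac nax ncx Habc Habx pc Kabx_p CK Kx Kabc_K) as (N & CN & Np & K_N).
  rewrite (Kpqx_eq_N P C par HL HC HS a b c x p q Kabc Kabx Kacx Kpqx K
    nab nac nax nbc nbx ncx Habc Kabc_x Habx Hacx pc Kabx_p qb Kacx_q Hpqx
    CK Kx Kabc_K N CN Np K_N).
  exact K_N.
Qed.
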